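(* Let $P$ and $P'$ be paths in $T$ such that $P$ is a subpath of $P'$ (i.e. the vertex set of $P$ is contained in that of $P'$). Then (1) $\overline{T}_1(P')\le\overline{T}_1(P)$ and $\overline{T}_2(P)\le\overline{T}_2(P')$; (2) $\overline{S}(P)\le\overline{S}(P')$ and $\overline{S}^2(P)\le\overline{S}^2(P')$; (3) $\overline{Q}(P)\le\overline{Q}(P')$ (in $[0,+\infty]$).
   Context: Let $T=(V,E)$ be a finite tree with vertex set $V=\{v_1,\dots,v_n\}$ and positive edge lengths; $d(x,y)$ denotes the length of the unique path in $T$ between vertices $x,y$. Each vertex $v_i$ has a demand rate $\lambda_i\ge 0$, with $\lambda=\sum_i\lambda_i>0$, and weight $w_i=\lambda_i/\lambda$; $w(T)=\sum_i w_i=1$. A path $P$ is the vertex sequence $p(1),\dots,p(k)$ of a simple path in $T$ (a single vertex is allowed); $|P|=d(p(1),p(k))$, and $d(P,v)=\min_j d(p(j),v)$. For $v\in V$, $p_P(v)$ denotes the unique vertex of $P$ closest to $v$. For a vertex $p$ of $P$, the branch $T_p$ (with respect to $P$) is the set of vertices $v$ with $p_P(v)=p$, and $w_{T_p}=\sum_{v_i\in T_p}w_i$. For a vertex $p$ of $P$ put $\overline{d}_P(p)=\sum_{j=1}^k w_{T_{p(j)}}\,d(p(j),p)$. Fix a speed $v_t>0$, constants $G_i\ge 0$ ($i=1,\dots,n$) and a constant $\overline{G}\ge 0$. Define $\overline{T}_1(P)=\frac{1}{v_t}\sum_i w_i\,d(P,v_i)$, $\overline{T}_2(P)=\frac{1}{v_t}\sum_i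 w_i\,\overline{d}_P(p_P(v_i))$, $\overline{S}(P)=\overline{T}_2(P)+\overline{G}$, $s_i(P)=\frac{1}{v_t}\bigl(\overline{d}_P(p_P(v_i))+G_i\bigr)$, $\overline{S}^2(P)=\sum_i w_i\,s_i(P)^2$, and $\overline{Q}(P)=\dfrac{\lambda\,\overline{S}^2(P)}{2(1-\lambda\overline{S}(P))}$ if $\lambda\overline{S}(P)<1$, $\overline{Q}(P)=+\infty$ otherwise. *)

From HB Require Import structures.
From mathcomp Require Import all_boot all_order all_algebra.
From Stdlib Require Import ClassicalEpsilon.
Set Implicit Arguments. Unset Strict Implicit. Unset Printing Implicit Defensive.
Import Order.TTheory GRing.Theory Num.Theory.
Local Open Scope ring_scope.

Section TreeQueue.
Variable R : realFieldType.
Variable V : finType.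
Variable e : rel V.
Variable len : V -> V -> R.

Definition spath (x y : V) (p : seq V) : bool :=
  [&& path e x p, uniq (x :: p) & last x p == y].

Definition is_tree : Prop :=
  symmetric e /\ irreflexive e /\
  (forall x y : V, exists! p : seq V, spath x y p).

Definition pos_lengths : Prop :=
  (forall x y, len x y = len y x) /\ (forall x y, e x y -> 0 < len x y).

Definition plen (x : V) (p : seq V) : R := \sum_(k <- pairmap len x p) k.

Definition dist (x y : V) : R :=
  plen x (epsilon (inhabits [::]) (fun p => spath x y p)).

Definition is_tpath (P : seq V) : bool :=
  if P is x :: p then path e x p && uniq P else false.

Definition distP (P : seq V) (v : V) : R :=
  \big[Num.min/dist (head v P) v]_(q <- P) dist q v.

Definition projP (P : seq V) (v : V) : V :=
  [arg min_(q < head v P | q \in P) dist q v]%O.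

Variable lam : V -> R.
Definition lamT : R := \sum_(v : V) lam v.
Definition wt (v : V) : R := lam v / lamT.

(* w_{T_p}: weight of the branch T_p w.r.t. P *)
Definition wbranch (P : seq V) (p : V) : R :=
  \sum_(v : V | projP P v == p) wt v.

Definition dbar (P : seq V) (p : V) : R :=
  \sum_(q <- P) wbranch P q * dist q p.

Variables (vt : R) (G : V -> R) (Gbar : R).

Definition T1 (P : seq V) : R := vt^-1 * \sum_(v : V) wt v * distP P v.
Definition T2 (P : seq V) : R := vt^-1 * \sum_(v : V) wt v * dbar P (projP P v).
Definition Sbar (P : seq V) : R := T2 P + Gbar.
Definition si (P : seq V) (v : V) : R := vt^-1 * (dbar P (projP P v) + G v).
Definition S2bar (P : seq V) : R := \sum_(v : V) wt v * si P v ^+ 2.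

(* values in [0, +oo]: None stands for +oo *)
Definition Qbar (P : seq V) : option R :=
  if lamT * Sbar P < 1 then Some (lamT * S2bar P / (2 * (1 - lamT * Sbar P)))
  else None.

End TreeQueue.

(* order on R extended by +oo (None) *)
Definition le_ext (R : realFieldType) (a b : option R) : bool :=
  match a, b with
  | _, None => true
  | None, Some _ => false
  | Some x, Some y => x <= y
  end.

From Pilot Require Import Defs.
From HB Require Import structures.
From mathcomp Require Import all_boot all_order all_algebra lra.
From Stdlib Require Import ClassicalEpsilon.
Set Implicit Arguments. Unset Strict Implicit. Unset Printing Implicit Defensive.
Import Order.TTheory GRing.Theory Num.Theory.
Local Open Scope ring_scope.

(* In a tree the closest-point projection onto a path P is a gate: every
   vertex q of P satisfies d(q, v) = d(q, p_P(v)) + d(p_P(v), v).  Hence, for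
   P contained in P', p_P factors through p_P' and is nonexpansive, so
   d(p_P(u), p_P(v)) <= d(p_P'(u), p_P'(v)).  Writing
   \overline{d}_P(p_P(v)) = sum_u w_u d(p_P(u), p_P(v)) gives the comparison
   of T2, S and S^2 termwise, the gate identity gives the one of T1, and Q is
   increasing in S and S^2. *)

Section TreeMetric.
Variables (R : realFieldType) (V : finType) (e : rel V) (len : V -> V -> R).
Hypothesis tree : is_tree e.
Hypothesis lengths : pos_lengths e len.

Local Notation plen := (plen len).
Local Notation dist := (dist e len).

Lemma plen_cons x y p : plen x (y :: p) = len x y + plen y p.
Proof. by rewrite /Defs.plen /= big_cons. Qed.

Lemma plen_cat x p q : plen x (p ++ q) = plen x p + plen (last x p) q.
Proof. by rewrite /Defs.plen pairmap_cat big_cat. Qed.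

Lemma plen_rcons x p z : plen x (rcons p z) = plen x p + len (last x p) z.
Proof. by rewrite -cats1 plen_cat plen_cons /Defs.plen big_nil addr0. Qed.

Lemma plen_ge0 x p : path e x p -> 0 <= plen x p.
Proof.
elim: p x => [|y p IHp] x /=; first by rewrite /Defs.plen big_nil.
by case/andP=> exy hp; rewrite plen_cons addr_ge0 ?IHp // ltW ?lengths.2.
Qed.

Lemma last_rev_belast (T : Type) (x : T) p : last (last x p) (rev (belast x p)) = x.
Proof. by elim: p x => [|y p IHp] x //=; rewrite rev_cons last_rcons. Qed.

Lemma plen_rev x p : plen (last x p) (rev (belast x p)) = plen x p.
Proof.
elim: p x => [|y p IHp] x //=.
by rewrite rev_cons plen_rcons IHp plen_cons addrC lengths.1 last_rev_belast.
Qed.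

Lemma dist_spath x y p : spath e x y p -> dist x y = plen x p.
Proof.
move=> hp; have [p0 [_ p0_uniq]] := tree.2.2 x y.
have hq := epsilon_spec (inhabits [::]) (fun q => spath e x y q) (ex_intro _ p hp).
by rewrite /Defs.dist -(p0_uniq _ hq) (p0_uniq _ hp).
Qed.

Lemma dist_ge0 x y : 0 <= dist x y.
Proof.
have [p [hp _]] := tree.2.2 x y.
by rewrite (dist_spath hp); apply: plen_ge0; case/and3P: hp.
Qed.

Lemma dist_xx x : dist x x = 0.
Proof.
have hx : spath e x x [::] by rewrite /spath /= eqxx.
by rewrite (dist_spath hx) /Defs.plen big_nil.
Qed.

Lemma dist_eq0 x y : dist x y = 0 -> x = y.
Proof.
have [[|z p] [hp _]] := tree.2.2 x y; first by case/and3P: hp => _ _ /eqP.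
case/and3P: hp (dist_spath hp) => /= /andP [exz hzp] _ _ ->.
rewrite plen_cons => /eqP; rewrite paddr_eq0 ?plen_ge0 // ?ltW ?lengths.2 //.
by rewrite gt_eqF ?lengths.2.
Qed.

Lemma spath_rev x y p :
  spath e x y p -> spath e y x (rev (belast x p)).
Proof.
case/and3P=> hp hu /eqP <-; apply/and3P; split.
- rewrite rev_path (eq_path (e' := e)) // => a b; exact: tree.1.
- by rewrite -rev_rcons -lastI rev_uniq.
- by rewrite last_rev_belast.
Qed.

Lemma distC x y : dist x y = dist y x.
Proof.
have [p [hp _]] := tree.2.2 x y.
rewrite (dist_spath hp) (dist_spath (spath_rev hp)).
by case/and3P: hp => _ _ /eqP <-; rewrite plen_rev.
Qed.

Lemma spath_suffix x y p p1 g p2 :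
  spath e x y p -> x :: p = p1 ++ g :: p2 -> spath e g y p2.
Proof.
case/and3P=> hp hu hl E; apply/and3P; split.
- by move: hp; rewrite -/(sorted e (x :: p)) E => /cat_sorted2 [].
- by move: hu; rewrite E cat_uniq => /and3P [].
- by move: hl; rewrite -[last x p]/(last x (x :: p)) E last_cat.
Qed.

Lemma dist_spath_cat x y z p q : spath e x y p -> spath e y z q ->
  ~~ has (mem (x :: p)) q -> dist x z = dist x y + dist y z.
Proof.
move=> hxy hyz hdisj; case/and3P: (hxy) (hyz) => hp hu /eqP hl /and3P [hq hu' /eqP hl'].
have hxz : spath e x z (p ++ q).
  rewrite /spath cat_path hp hl hq -cat_cons cat_uniq hu hdisj last_cat hl hl' eqxx.
  by move: hu'; rewrite cons_uniq => /andP [_ ->].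
by rewrite (dist_spath hxz) (dist_spath hxy) (dist_spath hyz) plen_cat hl.
Qed.

Lemma dist_spath_split x y p1 g p2 : spath e x y (p1 ++ g :: p2) ->
  dist x y = dist x g + dist g y.
Proof.
move=> hxy; case/and3P: (hxy) => hp hu _.
move: hp; rewrite cat_path /= => /and3P [hp1 elg _].
move: hu; rewrite -cat_cons cat_uniq => /and3P [hu1 hg _].
have hgx : g \notin x :: p1 by apply: contra hg => hgx; apply/hasP; exists g; rewrite ?mem_head.
have hxg : spath e x g (rcons p1 g).
  by rewrite /spath rcons_path hp1 elg -rcons_cons rcons_uniq hgx hu1 last_rcons eqxx.
have hgy := spath_suffix hxy (erefl ((x :: p1) ++ g :: p2)).
by rewrite (dist_spath hxy) (dist_spath hxg) (dist_spath hgy) -cat_rcons plen_cat last_rcons.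
Qed.

Lemma dist_spath_mem x y p g : spath e x y p -> g \in x :: p ->
  dist x y = dist x g + dist g y.
Proof.
move=> hxy /predU1P [-> | hg]; first by rewrite dist_xx add0r.
by move: hxy; case/splitPr: hg => p1 p2; apply: dist_spath_split.
Qed.

Lemma spath_of_sorted s1 a t s2 :
  sorted e (s1 ++ a :: t ++ s2) -> uniq (s1 ++ a :: t ++ s2) ->
  spath e a (last a t) t.
Proof.
rewrite -cat_cons catA => /cat_sorted2 [/cat_sorted2 [_ ht] _].
by rewrite !cat_uniq => /and3P [/and3P [_ _ hu] _ _]; apply/and3P.
Qed.

Lemma tpath_sorted_uniq P : is_tpath e P -> sorted e P /\ uniq P.
Proof. by case: P => //= x p /andP []. Qed.

Lemma tpath_head P v : is_tpath e P -> head v P \in P.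
Proof. by case: P => // x p _; exact: mem_head. Qed.

Lemma tpath_segment P a b : is_tpath e P -> a \in P -> b \in P ->
  exists2 t, spath e a b t & {subset a :: t <= P}.
Proof.
move=> /tpath_sorted_uniq [+ +] ha; case/splitPr: ha => s1 s2.
rewrite mem_cat inE => hs hu /or3P [hb | /eqP -> | hb].
- move: hs hu; case/splitPr: hb => s3 s4; rewrite -catA /= -(cat_rcons a s4) => hs hu.
  have := spath_rev (spath_of_sorted hs hu); rewrite belast_rcons last_rcons.
  move=> hab; exists (rev (b :: s4)) => // z.
  by rewrite !(inE, mem_rev, mem_cat, mem_rcons); case/orP=> [->|/orP [] ->]; rewrite ?orbT.
- exists [::]; first by rewrite /spath /= eqxx.
  by move=> z; rewrite mem_seq1 => /eqP ->; rewrite mem_cat mem_head orbT.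
- move: hs hu; case/splitPr: hb => s3 s4; rewrite -(cat_rcons b s3) => hs hu.
  have := spath_of_sorted hs hu; rewrite last_rcons => hab.
  exists (rcons s3 b) => // z.
  by rewrite !(inE, mem_cat, mem_rcons); case/orP=> [->|/orP [] ->]; rewrite ?orbT.
Qed.

Lemma has_split_last (T : Type) (a : pred T) s : has a s ->
  exists p1 g p2, [/\ s = p1 ++ g :: p2, a g & ~~ has a p2].
Proof.
elim: s => [|y s IHs] //=; have [/IHs [p1 [g [p2 [-> ag hp2]]]] _ | hs] := boolP (has a s).
  by exists (y :: p1), g, p2.
by rewrite orbF => ay; exists [::], y, s.
Qed.

Definition gate (P : seq V) (v g : V) : Prop :=
  g \in P /\ forall q, q \in P -> dist q v = dist q g + dist g v.

Lemma gate_exists P v : is_tpath e P -> exists g, gate P v g.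
Proof.
move=> hP; have hxP := tpath_head v hP; set x := head v P in hxP.
have [s [hxv _]] := tree.2.2 x v.
(* g is the last vertex of the path from x to v lying on P; the rest of that
   path avoids P, so it prolongs every segment of P ending at g simply. *)
have hs : has (mem P) (x :: s) by rewrite /= hxP.
have [p1 [g [p2 [Es hg hp2]]]] := has_split_last hs.
have hgv := spath_suffix hxv Es.
exists g; split => // q hq.
have [t hqg htP] := tpath_segment hP hq hg.
by apply: dist_spath_cat hqg hgv _; apply: contra hp2; apply: sub_has.
Qed.

Lemma gate_unique P v g1 g2 : gate P v g1 -> gate P v g2 -> g1 = g2.
Proof.
move=> [hg1 eq1] [hg2 eq2]; apply: dist_eq0.
have := eq1 _ hg2; have := eq2 _ hg1; have := dist_ge0 g1 g2.
rewrite (distC g2 g1); lra.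
Qed.

Lemma dist_triangle x y z : dist x z <= dist x y + dist y z.
Proof.
have [p [hxy _]] := tree.2.2 x y.
have hP : is_tpath e (x :: p) by case/and3P: hxy => /= -> ->.
have [g [hg eqg]] := gate_exists z hP.
have hy : y \in x :: p by case/and3P: hxy => _ _ /eqP <-; exact: mem_last.
rewrite (dist_spath_mem hxy hg) (eqg _ (mem_head _ _)) (eqg _ hy) (distC y g).
have := dist_ge0 g y; lra.
Qed.

Lemma gate_nonexpansive P x y gx gy : gate P x gx -> gate P y gy ->
  dist gx gy <= dist x y.
Proof.
move=> [hgx eqx] [hgy eqy].
have := eqx _ hgy; have := eqy _ hgx; have := dist_triangle gx x y.
have := dist_triangle gy y x; rewrite (distC gy gx) (distC y x); lra.
Qed.

Lemma gate_comp P P' v g' g : {subset P <= P'} ->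
  gate P' v g' -> gate P g' g -> gate P v g.
Proof.
move=> sPP' [hg' eqg'] [hg eqg]; split => // q hq.
rewrite (eqg' _ (sPP' _ hq)) (eqg _ hq) (eqg' _ (sPP' _ hg)); lra.
Qed.

Lemma projP_gate P v : is_tpath e P -> gate P v (projP e len P v).
Proof.
move=> hP; have [g [hg eqg]] := gate_exists v hP.
have hx := tpath_head v hP.
rewrite /projP; case: arg_minP => // g' hg' g'_min.
suff -> : g' = g by [].
apply: dist_eq0; have := g'_min _ hg; have := eqg _ hg'; have := dist_ge0 g' g; lra.
Qed.

Lemma distP_projP P v : is_tpath e P -> distP e len P v = dist (projP e len P v) v.
Proof.
move=> hP; have [hg eqg] := projP_gate v hP.
have hx := tpath_head v hP.
apply/eqP; rewrite eq_le /distP ge_bigmin_seq //= big_seq.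
by apply: le_bigmin => [|q hq]; rewrite ?(eqg _ hx) ?(eqg _ hq) lerDr dist_ge0.
Qed.

End TreeMetric.

Section PathMonotone.
Variables (R : realFieldType) (V : finType) (e : rel V) (len : V -> V -> R).
Variables (lam : V -> R) (vt : R) (G : V -> R) (Gbar : R).
Hypothesis tree : is_tree e.
Hypothesis lengths : pos_lengths e len.
Hypothesis lam_ge0 : forall v, 0 <= lam v.
Hypothesis lamT_gt0 : 0 < lamT lam.
Hypothesis vt_gt0 : 0 < vt.
Hypothesis G_ge0 : forall v, 0 <= G v.

Local Notation dist := (dist e len).
Local Notation projP := (projP e len).
Local Notation dbar := (dbar e len lam).

Lemma wt_ge0 v : 0 <= wt lam v.
Proof. by rewrite divr_ge0 // ltW. Qed.

Lemma dbar_ge0 Q p : 0 <= dbar Q p.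
Proof.
apply: sumr_ge0 => q _; rewrite mulr_ge0 ?dist_ge0 //.
by apply: sumr_ge0 => v _; exact: wt_ge0.
Qed.

Lemma dbar_projP Q p : is_tpath e Q ->
  dbar Q p = \sum_(u : V) wt lam u * dist (projP Q u) p.
Proof.
move=> hQ; have [_ uQ] := tpath_sorted_uniq hQ; rewrite /Defs.dbar /wbranch.
under eq_bigr do rewrite big_distrl /= big_mkcond /=.
rewrite exchange_big /=; apply: eq_bigr => u _.
have [hu _] := projP_gate tree lengths u hQ.
rewrite -big_mkcond /= (big_rem (projP Q u)) //= eqxx big1_seq ?addr0 //.
by move=> q /andP [/eqP <-]; rewrite mem_rem_uniqF.
Qed.

Variables P P' : seq V.
Hypothesis hP : is_tpath e P.
Hypothesis hP' : is_tpath e P'.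
Hypothesis sPP' : {subset P <= P'}.

Lemma projP_subpath v : projP P v = projP P (projP P' v).
Proof.
apply: gate_unique (projP_gate tree lengths v hP) _ => //.
apply: gate_comp sPP' (projP_gate tree lengths v hP') (projP_gate tree lengths _ hP).
Qed.

Lemma dist_projP_subpath u v : dist (projP P u) (projP P v) <= dist (projP P' u) (projP P' v).
Proof.
rewrite (projP_subpath u) (projP_subpath v).
exact: gate_nonexpansive (projP_gate tree lengths _ hP) (projP_gate tree lengths _ hP).
Qed.

Lemma dbar_projP_subpath v : dbar P (projP P v) <= dbar P' (projP P' v).
Proof.
rewrite !dbar_projP //; apply: ler_sum => u _.
by rewrite ler_wpM2l ?wt_ge0 ?dist_projP_subpath.
Qed.

Lemma T1_subpath : T1 e len lam vt P' <= T1 e len lam vt P.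
Proof.
rewrite /T1; apply: ler_wpM2l; first by rewrite invr_ge0 ltW.
apply: ler_sum => v _; apply: ler_wpM2l; first exact: wt_ge0.
rewrite !distP_projP //.
have [hv _] := projP_gate tree lengths v hP; have [_ eqv] := projP_gate tree lengths v hP'.
by rewrite (eqv _ (sPP' hv)) lerDr dist_ge0.
Qed.

Lemma T2_subpath : T2 e len lam vt P <= T2 e len lam vt P'.
Proof.
rewrite /T2; apply: ler_wpM2l; first by rewrite invr_ge0 ltW.
by apply: ler_sum => v _; rewrite ler_wpM2l ?wt_ge0 ?dbar_projP_subpath.
Qed.

Lemma Sbar_subpath : Sbar e len lam vt Gbar P <= Sbar e len lam vt Gbar P'.
Proof. by rewrite /Sbar lerD2r T2_subpath. Qed.

Lemma si_ge0 Q v : 0 <= si e len lam vt G Q v.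
Proof. by rewrite /si mulr_ge0 ?addr_ge0 ?dbar_ge0 // invr_ge0 ltW. Qed.

Lemma S2bar_ge0 Q : 0 <= S2bar e len lam vt G Q.
Proof. by apply: sumr_ge0 => v _; rewrite mulr_ge0 ?wt_ge0 ?exprn_ge0 ?si_ge0. Qed.

Lemma S2bar_subpath : S2bar e len lam vt G P <= S2bar e len lam vt G P'.
Proof.
apply: ler_sum => v _; rewrite ler_wpM2l ?wt_ge0 // lerXn2r ?nnegrE ?si_ge0 //.
rewrite /si; apply: ler_wpM2l; first by rewrite invr_ge0 ltW.
by rewrite lerD2r dbar_projP_subpath.
Qed.

Lemma Qbar_subpath : le_ext (Qbar e len lam vt G Gbar P) (Qbar e len lam vt G Gbar P').
Proof.
have hS := Sbar_subpath; rewrite /Qbar.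
case: (boolP (lamT lam * Sbar e len lam vt Gbar P' < 1)) => [hS'|]; last by case: ifP.
have hS1 : lamT lam * Sbar e len lam vt Gbar P < 1.
  by apply: le_lt_trans hS'; rewrite ler_wpM2l // ltW.
rewrite hS1 /=; apply: ler_pM.
- by rewrite mulr_ge0 ?S2bar_ge0 // ltW.
- by rewrite invr_ge0 mulr_ge0 // subr_ge0 ltW.
- by rewrite ler_wpM2l ?S2bar_subpath // ltW.
- rewrite lef_pV2 ?posrE ?mulr_gt0 ?subr_gt0 //.
  by rewrite ler_wpM2l // lerD2l lerN2 ler_wpM2l // ltW.
Qed.

End PathMonotone.

Theorem corollary2 (R : realFieldType) (V : finType) (e : rel V)
    (len : V -> V -> R) (lam : V -> R) (vt : R) (G : V -> R) (Gbar : R)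
    (P P' : seq V) :
  is_tree e -> pos_lengths e len ->
  (forall v, 0 <= lam v) -> 0 < lamT lam ->
  0 < vt -> (forall v, 0 <= G v) -> 0 <= Gbar ->
  is_tpath e P -> is_tpath e P' -> {subset P <= P'} ->
  (T1 e len lam vt P' <= T1 e len lam vt P /\
   T2 e len lam vt P <= T2 e len lam vt P') /\
  (Sbar e len lam vt Gbar P <= Sbar e len lam vt Gbar P' /\
   S2bar e len lam vt G P <= S2bar e len lam vt G P') /\
  le_ext (Qbar e len lam vt G Gbar P) (Qbar e len lam vt G Gbar P').
Proof.
move=> tree lengths lam_ge0 lamT_gt0 vt_gt0 G_ge0 _ hP hP' sPP'.
split; [split | split; [split |]].
- exact: T1_subpath.
- exact: T2_subpath.
- exact: Sbar_subpath.
- exact: S2bar_subpath.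
- exact: Qbar_subpath.
Qed.
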